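(* Consider the resilient constrained consensus algorithm described in the context, with at most $f$ Byzantine agents. Suppose $\mathcal X=\bigcap_{i\in\mathcal H}\mathcal X_i=\{x^*\}$ is a singleton, and suppose the set of normal agents $\mathcal H$ is $k$-redundant. Suppose there is a constant $\mu>0$ such that for every $x\in\mathbb R^m$ and every $\mathcal S\subseteq\mathcal H$ with $|\mathcal S|\ge n-k$, $$\max_{i\in\mathcal S}\mathrm{dist}(x,\mathcal X_i)\ \ge\ \mu\,\mathrm{dist}\Big(x,\bigcap_{i\in\mathcal S}\mathcal X_i\Big).$$ If $k>\frac{4f}{\mu^2}+2f-1$ and $0<\alpha<\frac{\mu^2k-2f\mu^2-4f+\mu^2}{4|\mathcal H|^3}$, then there is a constant $\rho\in(0,1)$ such that for all $t\ge 0$ $$\sum_{i\in\mathcal H}\|x_i(t)-x^*\|^2\le\rho^t\sum_{i\in\mathcal H}\|x_i(0)-x^*\|^2.$$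
   Context: Setting: There are $n$ agents $\mathcal N=\{1,\dots,n\}$, and every agent can communicate with every other agent (complete graph). An integer $f\ge 0$ is known to all agents. The agents are partitioned into normal agents $\mathcal H$ and Byzantine agents $\mathcal F$ with $|\mathcal F|\le f$, so $|\mathcal H|\ge n-f$. Each normal agent $i\in\mathcal H$ has a nonempty closed convex set $\mathcal X_i\subseteq\mathbb R^m$. Each normal agent's state is constrained to lie in $\mathcal X_i$; in particular $x_i(0)\in\mathcal X_i$. Algorithm (discrete time $t=0,1,2,\dots$): each normal agent $i$ has a state $x_i(t)\in\mathbb R^m$. At time $t$, agent $i$ receives a vector $x_{ji}(t)$ from each $j\in\mathcal N\setminus\{i\}$. If $j\in\mathcal H$, then $x_{ji}(t)=x_j(t)$. If $j\in\mathcal F$, then $x_{ji}(t)$ is arbitrary and may differ for different recipients. Agent $i$ discards the $f$ received vectors with the largest distance $\|x_i(t)-x_{ji}(t)\|$, with ties broken arbitrarily. Let $\mathcal M_i(t)\subseteq\mathcal N\setminus\{i\}$ be the set of the remaining $n-f-1$ senders. The update is $$x_i(t+1)=\mathrm P_{\mathcal X_i}\Big[x_i(t)+\alpha\sum_{j\in\mathcal M_i(t)}(x_{ji}(t)-x_i(t))\Big],$$ with $\alpha>0$ and $\mathrm P_{\mathcal C}$ the Euclidean projection onto $\mathcal C$. Definitions: $\mathrm{dist}(x,\mathcal C)=\|x-\mathrm P_{\mathcal C}[x]\|$. $\mathcal H$ is $k$-redundant if for every $\mathcal S\subseteq\mathcal H$ with $|\mathcal S|\ge n-k$ we have $\bigcap_{i\in\mathcal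 S}\mathcal X_i=\bigcap_{i\in\mathcal H}\mathcal X_i$. *)

From mathcomp Require Import all_boot all_order all_algebra.
From mathcomp Require Import boolp classical_sets reals.
Set Implicit Arguments. Unset Strict Implicit. Unset Printing Implicit Defensive.
Import Order.TTheory GRing.Theory Num.Theory.
Local Open Scope ring_scope.
Local Open Scope classical_set_scope.

Definition enorm (R : realType) (m : nat) (v : 'rV[R]_m) : R :=
  Num.sqrt (\sum_(j < m) v ord0 j ^+ 2).

Definition eclosed (R : realType) (m : nat) (C : set 'rV[R]_m) : Prop :=
  forall x, (forall e : R, 0 < e -> exists2 y, C y & enorm (x - y) < e) -> C x.

Definition convex_set (R : realType) (m : nat) (C : set 'rV[R]_m) : Prop :=
  forall x y (l : R), C x -> C y -> 0 <= l <= 1 -> C (l *: x + (1 - l) *: y).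

Definition is_proj (R : realType) (m : nat) (C : set 'rV[R]_m) (x p : 'rV[R]_m) : Prop :=
  C p /\ forall y, C y -> enorm (x - p) <= enorm (x - y).

(* P_C[x]: the Euclidean projection (unique for nonempty closed convex C). *)
Definition proj (R : realType) (m : nat) (C : set 'rV[R]_m) (x : 'rV[R]_m) : 'rV[R]_m :=
  xget 0 [set p | is_proj C x p].

Definition dist (R : realType) (m : nat) (x : 'rV[R]_m) (C : set 'rV[R]_m) : R :=
  enorm (x - proj C x).

Definition capX (R : realType) (m n : nat) (X : 'I_n -> set 'rV[R]_m) (S : {set 'I_n}) : set 'rV[R]_m :=
  [set x | forall i, i \in S -> X i x].

Definition k_redundant (R : realType) (m n : nat) (X : 'I_n -> set 'rV[R]_m)
    (H : {set 'I_n}) (k : nat) : Prop :=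
  forall S : {set 'I_n}, S \subset H -> (n - k <= #|S|)%N -> capX X S = capX X H.

(* One run of the resilient constrained consensus algorithm.
   x t i : state of agent i at time t (meaningful for i \in H);
   msg t j i : vector received by i from j at time t;
   M t i : set of kept senders of agent i at time t. *)
Definition algorithm_run (R : realType) (m n f : nat) (X : 'I_n -> set 'rV[R]_m)
    (H : {set 'I_n}) (alpha : R) (x : nat -> 'I_n -> 'rV[R]_m)
    (msg : nat -> 'I_n -> 'I_n -> 'rV[R]_m) (M : nat -> 'I_n -> {set 'I_n}) : Prop :=
  (forall i, i \in H -> X i (x 0%N i)) /\
  (forall t i j, i \in H -> j \in H -> j != i -> msg t j i = x t j) /\
  (forall t i, i \in H ->
     [/\ M t i \subset [set~ i],
         #|M t i| = (n - f - 1)%N,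
         (forall j j', j \in M t i -> j' \in [set~ i] :\: M t i ->
            enorm (x t i - msg t j i) <= enorm (x t i - msg t j' i)) &
         x t.+1 i = proj (X i) (x t i + alpha *: \sum_(j in M t i) (msg t j i - x t i))]).

From mathcomp Require Import all_boot all_order all_algebra.
From mathcomp Require Import boolp classical_sets reals.
From mathcomp Require Import ring lra zify.
Set Implicit Arguments. Unset Strict Implicit. Unset Printing Implicit Defensive.
Import Order.TTheory GRing.Theory Num.Theory.
Local Open Scope ring_scope.
Local Open Scope classical_set_scope.

(* The Lyapunov function V(t) = sum_{i in H} |x_i(t) - x*|^2 decreases
   geometrically.  Projecting onto X_i, which contains x*, does not increase the
   distance to x*, so it suffices to bound the pre-projection point
   x_i + alpha u_i.  In 2 <x_i - x*, u_i>, a kept normal neighbour j contributes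
   |x_j - x*|^2 - |x_i - x*|^2 - |x_i - x_j|^2.  By the trimming rule, a kept
   Byzantine value is no farther from x_i than any discarded normal one, and
   discarded normal agents are at least as numerous as kept Byzantine ones.
   Regularity together with k-redundancy leaves fewer than n - k normal agents
   within distance mu |x_i - x*| of x_i, so at least k + 1 - 2f kept normal
   neighbours each contribute -mu^2 |x_i - x*|^2.  Summing over i gives
   V(t+1) <= (1 - alpha c + 2 alpha^2 |H|^3) V(t) with
   c = mu^2 (k + 1 - 2f) - 4f, and this factor is < 1 for the given alpha.
   The projections exist because a minimizing sequence for the distance to a
   closed convex set is Cauchy, by the parallelogram law. *)

Lemma sum_sqr_le (R : realFieldType) (I : finType) (A : pred I) (a : I -> R) :
  (\sum_(i in A) a i) ^+ 2 <= #|A|%:R * \sum_(i in A) a i ^+ 2.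
Proof.
have amgm i j : a i * a j <= a i ^+ 2 / 2 + a j ^+ 2 / 2.
  by have := sqr_ge0 (a i - a j); nra.
rewrite expr2 mulr_suml.
apply: le_trans (_ : \sum_(i in A) \sum_(j in A) (a i ^+ 2 / 2 + a j ^+ 2 / 2) <= _).
  by apply: ler_sum => i _; rewrite mulr_sumr; apply: ler_sum => j _; apply: amgm.
rewrite (eq_bigr (fun i => #|A|%:R * (a i ^+ 2 / 2) + (\sum_(j in A) a j ^+ 2) / 2)); last first.
  by move=> i _; rewrite big_split /= sumr_const -mulr_suml mulr_natl.
by rewrite big_split /= sumr_const -!mulr_sumr -mulr_suml mulr_natl -mulrnAr; lra.
Qed.

Section Euclid.
Variables (R : realType) (m : nat).
Implicit Types (u v w z : 'rV[R]_m).

Definition sqnorm v : R := \sum_(j < m) v ord0 j ^+ 2.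
Definition dotv u v : R := \sum_(j < m) u ord0 j * v ord0 j.

Lemma sqnorm_ge0 v : 0 <= sqnorm v.
Proof. by apply: sumr_ge0 => j _; rewrite sqr_ge0. Qed.

Lemma sqnorm0 : sqnorm 0 = 0.
Proof. by rewrite /sqnorm big1 // => j _; rewrite mxE expr0n. Qed.

Lemma enorm_sqr v : enorm v ^+ 2 = sqnorm v.
Proof. by rewrite sqr_sqrtr // sqnorm_ge0. Qed.

Lemma enorm_le u v : (enorm u <= enorm v) = (sqnorm u <= sqnorm v).
Proof. by rewrite /enorm ler_sqrt // sqnorm_ge0. Qed.

Lemma enorm_lt v (e : R) : 0 < e -> (enorm v < e) = (sqnorm v < e ^+ 2).
Proof.
by move=> e0; rewrite /enorm -[e in LHS]ger0_norm ?ltW // -sqrtr_sqr ltr_sqrt ?exprn_gt0.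
Qed.

Lemma sqnormN v : sqnorm (- v) = sqnorm v.
Proof. by apply: eq_bigr => j _; rewrite !mxE sqrrN. Qed.

Lemma sqnorm_subC u v : sqnorm (u - v) = sqnorm (v - u).
Proof. by rewrite -sqnormN opprB. Qed.

Lemma sqnormZ (a : R) v : sqnorm (a *: v) = a ^+ 2 * sqnorm v.
Proof. by rewrite /sqnorm mulr_sumr; apply: eq_bigr => j _; rewrite !mxE exprMn. Qed.

Lemma sqnormD u v : sqnorm (u + v) = sqnorm u + 2 * dotv u v + sqnorm v.
Proof.
rewrite /sqnorm /dotv mulr_sumr -!big_split /=.
by apply: eq_bigr => j _; rewrite !mxE; ring.
Qed.

Lemma dotvZr (a : R) u v : dotv u (a *: v) = a * dotv u v.
Proof. by rewrite /dotv mulr_sumr; apply: eq_bigr => j _; rewrite !mxE mulrCA. Qed.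

Lemma dotv_sumr (I : finType) (A : pred I) u (F : I -> 'rV[R]_m) :
  dotv u (\sum_(i in A) F i) = \sum_(i in A) dotv u (F i).
Proof.
by rewrite /dotv exchange_big /=; apply: eq_bigr => j _; rewrite summxE mulr_sumr.
Qed.

Lemma dotv_le_amgm (t : R) u v : 0 < t -> 2 * dotv u v <= t * sqnorm u + sqnorm v / t.
Proof.
move=> t0; rewrite /dotv /sqnorm mulr_sumr mulr_sumr mulr_suml -big_split /=.
apply: ler_sum => j _; rewrite -subr_ge0.
have -> : t * u ord0 j ^+ 2 + v ord0 j ^+ 2 / t - 2 * (u ord0 j * v ord0 j)
        = (t * u ord0 j - v ord0 j) ^+ 2 / t by field; rewrite gt_eqF.
by rewrite divr_ge0 ?sqr_ge0 ?ltW.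
Qed.

Lemma sqnormB_le u v : sqnorm (u - v) <= 2 * sqnorm u + 2 * sqnorm v.
Proof.
rewrite sqnormD sqnormN; have := dotv_le_amgm u (- v) ltr01.
by rewrite mul1r divr1 sqnormN; lra.
Qed.

Lemma sqr_coord_le_sqnorm v (j : 'I_m) : v ord0 j ^+ 2 <= sqnorm v.
Proof. by rewrite /sqnorm (bigD1 j) //= lerDl sumr_ge0 // => i _; rewrite sqr_ge0. Qed.

Lemma sqnorm_sum_le (I : finType) (A : pred I) (F : I -> 'rV[R]_m) :
  sqnorm (\sum_(i in A) F i) <= #|A|%:R * \sum_(i in A) sqnorm (F i).
Proof.
rewrite /sqnorm exchange_big /= mulr_sumr; apply: ler_sum => j _.
by rewrite summxE; apply: sum_sqr_le.
Qed.

Lemma sqnorm_parallelogram z a b :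
  sqnorm (a - b) + 4 * sqnorm (z - ((1/2) *: a + (1 - 1/2) *: b))
  = 2 * sqnorm (z - a) + 2 * sqnorm (z - b).
Proof.
by rewrite /sqnorm !mulr_sumr -!big_split /=; apply: eq_bigr => j _; rewrite !mxE; field.
Qed.

End Euclid.

Lemma invS_gt0 (R : realFieldType) (k : nat) : 0 < k.+1%:R^-1 :> R.
Proof. by rewrite invr_gt0 ltr0Sn. Qed.

Lemma invS_le1 (R : realFieldType) (k : nat) : k.+1%:R^-1 <= 1 :> R.
Proof. by rewrite invf_le1 ?ltr0Sn // ler1n. Qed.

Lemma exists_invS_lt (R : realType) (K x : R) : 0 < x -> exists k, K * k.+1%:R^-1 < x.
Proof.
move=> x0; have K1 : 0 < `|K| + 1 by rewrite ltr_pwDr.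
have [k] := ltr_add_invr (divr_gt0 x0 K1); rewrite add0r ltr_pdivlMr // => hk.
exists k; apply: le_lt_trans hk; rewrite mulrC.
by rewrite ler_pM2l ?invS_gt0 // (le_trans (ler_norm K)) // lerDl.
Qed.

Lemma le0_invS (R : realType) (x K : R) : (forall k, x <= K * k.+1%:R^-1) -> x <= 0.
Proof.
move=> h; rewrite leNgt; apply/negP => /(exists_invS_lt K) [k].
by rewrite ltNge h.
Qed.

Lemma cauchy_rate_limit (R : realType) (a r : nat -> R) :
  (forall k l, a k - a l <= r k + r l) -> exists p, forall k, `|p - a k| <= r k.
Proof.
move=> ha; pose S := [set a k - r k | k in [set: nat]].
have S0 : S !=set0 by exists (a 0%N - r 0%N), 0%N.
have Sub k : ubound S (a k + r k) by move=> _ [l _ <-]; have := ha l k; lra.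
exists (sup S) => k; rewrite ler_distl; apply/andP; split.
- by apply: sup_upper_bound; [split; last exists (a k + r k) | exists k].
- exact: ge_sup S0 (Sub k).
Qed.

Lemma row_cauchy_rate_limit (R : realType) m (Y : nat -> 'rV[R]_m) (r : nat -> R) :
  (forall k, 0 <= r k) -> (forall k l, sqnorm (Y k - Y l) <= (r k + r l) ^+ 2) ->
  exists p, forall k, sqnorm (p - Y k) <= m%:R * r k ^+ 2.
Proof.
move=> r0 hY.
have coord (c : 'I_m) : exists pc, forall k, `|pc - Y k ord0 c| <= r k.
  apply: cauchy_rate_limit => k l.
  have := le_trans (sqr_coord_le_sqnorm (Y k - Y l) c) (hY k l).
  by rewrite !mxE; have := r0 k; have := r0 l; nra.
have [P hP] := choice coord.
exists (\row_c P c) => k; rewrite /sqnorm.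
rewrite -[in leRHS](card_ord m) mulr_natl -sumr_const.
apply: ler_sum => c _; have := hP c k; rewrite !mxE ler_norml => /andP[]; nra.
Qed.

Lemma sqnorm_le_of_approx (R : realType) m (z p : 'rV[R]_m) (Y : nat -> 'rV[R]_m) (d K : R) :
  0 <= K -> (forall k, sqnorm (z - Y k) <= d + k.+1%:R^-1) ->
  (forall k, sqnorm (p - Y k) <= K * k.+1%:R^-1 ^+ 2) -> sqnorm (z - p) <= d.
Proof.
move=> K0 hz hp; suff : sqnorm (z - p) - d <= 0 by lra.
apply: (@le0_invS _ _ (d + 2 + 2 * K)) => k.
have -> : z - p = (z - Y k) + (Y k - p) by rewrite addrA subrK.
rewrite sqnormD; have := dotv_le_amgm (z - Y k) (Y k - p) (invS_gt0 R k).
rewrite [sqnorm (Y k - p)]sqnorm_subC.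
move: (hz k) (hp k) (invS_gt0 R k) (invS_le1 R k).
move: (sqnorm (z - Y k)) (sqnorm (p - Y k)) (k.+1%:R^-1) => a b t ha hb t0 t1 hdot.
have hbt : b / t <= K * t by rewrite ler_pdivrMr // -mulrA -expr2.
have hta : t * a <= t * (d + t) by rewrite ler_pM2l.
have t2 : t ^+ 2 <= t by rewrite expr2 ger_pMl.
have := ler_wpM2l K0 t2; nra.
Qed.

Section Projection.
Variables (R : realType) (m : nat) (C : set 'rV[R]_m).
Hypothesis C_convex : convex_set C.

Lemma convex_near_minimizers z (d : R) a b :
  (forall y, C y -> d <= sqnorm (z - y)) -> C a -> C b ->
  sqnorm (a - b) <= 2 * (sqnorm (z - a) - d) + 2 * (sqnorm (z - b) - d).
Proof.
move=> dmin Ca Cb.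
have Cmid : C ((1/2) *: a + (1 - 1/2) *: b).
  by apply: C_convex => //; rewrite divr_ge0 //= ler_pdivrMr // mul1r ler1n.
by have := sqnorm_parallelogram z a b; have := dmin _ Cmid; lra.
Qed.

Lemma is_proj_variational z p y : is_proj C z p -> C y -> 0 <= dotv (z - p) (p - y).
Proof.
move=> [Cp pmin] Cy; suff : - (2 * dotv (z - p) (p - y)) <= 0 by lra.
apply: (@le0_invS _ _ (sqnorm (p - y))) => k.
have l0 := invS_gt0 R k; move: (k.+1%:R^-1) l0 (invS_le1 R k) => l l0 l1.
have Cq : C (l *: y + (1 - l) *: p) by apply: C_convex => //; rewrite ltW.
have := pmin _ Cq; rewrite enorm_le.
have -> : z - (l *: y + (1 - l) *: p) = (z - p) + l *: (p - y).
  by apply/rowP => j; rewrite !mxE; ring.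
rewrite [sqnorm (_ + _ *: _)]sqnormD dotvZr sqnormZ => h.
by rewrite -(ler_pM2l l0); nra.
Qed.

Lemma sqnorm_proj_sub_le z p y : is_proj C z p -> C y -> sqnorm (p - y) <= sqnorm (z - y).
Proof.
move=> zp Cy; have := is_proj_variational zp Cy.
have -> : z - y = (z - p) + (p - y) by rewrite addrA subrK.
by rewrite [sqnorm (z - p + _)]sqnormD; have := sqnorm_ge0 (z - p); lra.
Qed.

Hypotheses (C_closed : eclosed C) (C0 : C !=set0).

Lemma proj_exists z : exists p, is_proj C z p.
Proof.
pose E := [set sqnorm (z - y) | y in C].
have Einf : has_inf E.
  split; first by have [y Cy] := C0; exists (sqnorm (z - y)), y.
  by exists 0 => _ [y _ <-]; apply: sqnorm_ge0.
pose d := inf E.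
have dmin y : C y -> d <= sqnorm (z - y).
  by move=> Cy; apply: ge_inf; [exact: Einf.2 | exists y].
pose e k : R := k.+1%:R^-1.
have minimizing k : exists y, C y /\ sqnorm (z - y) < d + e k ^+ 2.
  have [_ [y Cy <-] hy] := inf_adherent (exprn_gt0 2 (invS_gt0 R k)) Einf.
  by exists y.
have [Y HY] := choice minimizing.
have [p hp] : exists p, forall k, sqnorm (p - Y k) <= m%:R * (2 * e k) ^+ 2.
  apply: row_cauchy_rate_limit => [k | k l]; first by rewrite mulr_ge0 // ltW // invS_gt0.
  apply: le_trans (convex_near_minimizers dmin (HY k).1 (HY l).1) _.
  have := (HY k).2; have := (HY l).2; have := invS_gt0 R k; have := invS_gt0 R l.
  rewrite -/(e k) -/(e l); nra.
have {}hp k : sqnorm (p - Y k) <= 4 * m%:R * e k ^+ 2.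
  by rewrite (le_trans (hp k)) // exprMn; lra.
exists p; split.
  apply: C_closed => eps eps0.
  have [k hk] := exists_invS_lt (4 * m%:R) (exprn_gt0 2 eps0).
  exists (Y k); first exact: (HY k).1.
  rewrite enorm_lt //; apply: le_lt_trans hk; apply: le_trans (hp k) _.
  by apply: ler_wpM2l; [rewrite mulr_ge0 | rewrite expr2 ger_pMl ?invS_gt0 ?invS_le1].
move=> y Cy; rewrite enorm_le; apply: le_trans (dmin _ Cy).
apply: sqnorm_le_of_approx hp; first by rewrite mulr_ge0.
by move=> k; rewrite (le_trans (ltW (HY k).2)) // lerD2l expr2 ger_pMl ?invS_gt0 ?invS_le1.
Qed.

Lemma proj_spec z : is_proj C z (proj C z).
Proof. by apply: xgetPex; apply: proj_exists. Qed.

Lemma dist_le z y : C y -> dist z C <= enorm (z - y).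
Proof. exact: (proj_spec z).2. Qed.

End Projection.

Lemma dist_set1 (R : realType) m (z a : 'rV[R]_m) : dist z [set a] = enorm (z - a).
Proof.
have [pa _] : is_proj [set a] z (proj [set a] z).
  by apply: xgetPex; exists a; split => // y ->.
by rewrite /dist pa.
Qed.

Lemma card_near_lt (R : realType) m n k (H : {set 'I_n}) (X : 'I_n -> set 'rV[R]_m)
    (xstar y : 'rV[R]_m) (mu : R) (xs : 'I_n -> 'rV[R]_m) :
  (k < n)%N -> 0 < mu ->
  (forall i, i \in H -> [/\ X i !=set0, eclosed (X i) & convex_set (X i)]) ->
  (forall S : {set 'I_n}, S \subset H -> (n - k <= #|S|)%N -> capX X S = [set xstar]) ->
  (forall (y : 'rV[R]_m) (S : {set 'I_n}), S \subset H -> (n - k <= #|S|)%N ->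
     \big[Num.max/0]_(i in S) dist y (X i) >= mu * dist y (capX X S)) ->
  (forall j, j \in H -> X j (xs j)) ->
  (#|[set j in H | (sqnorm (y - xs j) < mu ^+ 2 * sqnorm (y - xstar))%R]| < n - k)%N.
Proof.
move=> kn mu0 hX hS hmu hxs; set S := [set j in H | _].
rewrite ltnNge; apply/negP => Sbig.
have SH : S \subset H by apply/fintype.subsetP => j; rewrite inE => /andP[].
have [j0 j0S] : exists j, j \in S.
  by apply/card_gt0P; apply: leq_trans Sbig; rewrite subn_gt0.
have dstar0 : 0 < mu * enorm (y - xstar).
  move: j0S; rewrite inE => /andP[_ /(le_lt_trans (sqnorm_ge0 _))].
  by rewrite pmulr_rgt0 ?exprn_gt0 // => ?; rewrite mulr_gt0 // sqrtr_gt0.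
have := hmu y S SH Sbig; rewrite hS // dist_set1; apply/negP; rewrite -ltNge.
apply: bigmax_lt => // j; rewrite inE => /andP[jH hj].
have [X0 Xcl Xcv] := hX j jH.
apply: le_lt_trans (dist_le Xcv Xcl X0 y (hxs j jH)) _.
by rewrite enorm_lt // exprMn enorm_sqr.
Qed.

Lemma sqnorm_sub_le_sum (R : realType) m n (H : {set 'I_n}) (xs : 'I_n -> 'rV[R]_m) xstar j l :
  j \in H -> l \in H -> j != l ->
  sqnorm (xs j - xs l) <= 2 * \sum_(i in H) sqnorm (xs i - xstar).
Proof.
move=> jH lH jl.
rewrite (big_setD1 j jH) (big_setD1 l) /=; last by rewrite !inE eq_sym jl.
have -> : xs j - xs l = (xs j - xstar) - (xs l - xstar) by rewrite opprB addrA subrK.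
have := sqnormB_le (xs j - xstar) (xs l - xstar).
have : 0 <= \sum_(i in (H :\ j) :\ l) sqnorm (xs i - xstar).
  by apply: sumr_ge0 => i _; apply: sqnorm_ge0.
lra.
Qed.

Section AgentStep.
Variables (R : realType) (m n f k : nat) (H : {set 'I_n}) (xs msg : 'I_n -> 'rV[R]_m)
  (M : {set 'I_n}) (i : 'I_n) (xstar : 'rV[R]_m) (mu : R).
Hypotheses (iH : i \in H) (card_byz : (#|~: H| <= f)%N) (f_lt_n : (f < n)%N)
  (msg_normal : forall j, j \in H -> j != i -> msg j = xs j)
  (M_sub : M \subset [set~ i]) (card_M : #|M| = (n - f - 1)%N)
  (M_nearest : forall j j', j \in M -> j' \in [set~ i] :\: M ->
      enorm (xs i - msg j) <= enorm (xs i - msg j')).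

Let d2 j := sqnorm (xs j - xstar).
Let V := \sum_(j in H) d2 j.
Let keptH := M :&: H.
Let keptB := M :\: H.
Let dropH := (H :\ i) :\: M.

(* [set~ i] here is the classical complement of [set i], so [inE] yields [j <> i]. *)
Lemma in_M_neq j : j \in M -> j != i.
Proof. by move=> jM; apply/eqP; have := fintype.subsetP M_sub j jM; rewrite inE. Qed.

Lemma card_kept : (#|keptH| + #|keptB| + f + 1 = n)%N.
Proof. by rewrite cardsID card_M; lia. Qed.

Lemma keptH_eq : keptH = (H :\ i) :&: M.
Proof.
apply/finset.setP => j; rewrite !inE; case jM : (j \in M); rewrite ?andbF //.
by rewrite (in_M_neq jM) andbT.
Qed.

Lemma card_H_split : (#|keptH| + #|dropH| + 1 = #|H|)%N.
Proof. by rewrite keptH_eq /dropH cardsID (cardsD1 i H) iH addn1. Qed.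

Lemma card_keptB : (#|keptB| <= #|~: H|)%N.
Proof. by apply: subset_leq_card; apply/fintype.subsetP => j; rewrite !inE => /andP[->]. Qed.

Lemma card_keptB_le_dropH : (#|keptB| <= #|dropH|)%N.
Proof.
have := card_kept; have := card_H_split; have := card_keptB.
have : (#|H| + #|~: H| = n)%N by rewrite cardsC card_ord.
lia.
Qed.

Lemma exists_dropH j : j \in keptB -> exists j', j' \in dropH.
Proof.
move=> jB; apply/card_gt0P; apply: leq_trans card_keptB_le_dropH.
by apply/card_gt0P; exists j.
Qed.

Lemma msg_keptH j : j \in keptH -> msg j = xs j.
Proof. by rewrite !inE => /andP[jM jH]; apply: msg_normal jH (in_M_neq jM). Qed.

Lemma sqnorm_msg_le_dropH j j' :
  j \in M -> j' \in dropH -> sqnorm (msg j - xs i) <= sqnorm (xs i - xs j').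
Proof.
move=> jM; rewrite !inE => /andP[j'M /andP[j'i j'H]].
rewrite sqnorm_subC -enorm_le -(msg_normal j'H j'i); apply: M_nearest jM _.
by rewrite !inE j'M j'i.
Qed.

Lemma sqnorm_msg_le j : j \in M -> sqnorm (msg j - xs i) <= 2 * V.
Proof.
move=> jM; case jH : (j \in H).
  rewrite msg_normal ?in_M_neq // sqnorm_subC.
  by apply: sqnorm_sub_le_sum; rewrite // eq_sym in_M_neq.
have [j' j'D] : exists j', j' \in dropH by apply: (@exists_dropH j); rewrite !inE jM jH.
apply: le_trans (sqnorm_msg_le_dropH jM j'D) _.
move: j'D; rewrite !inE => /andP[_ /andP[j'i j'H]].
by apply: sqnorm_sub_le_sum; rewrite // eq_sym.
Qed.

Lemma sqnorm_update_le : sqnorm (\sum_(j in M) (msg j - xs i)) <= 2 * #|H|%:R ^+ 2 * V.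
Proof.
apply: le_trans (sqnorm_sum_le _ _) _.
have V0 : 0 <= V by apply: sumr_ge0 => j _; apply: sqnorm_ge0.
have MH : #|M|%:R <= #|H|%:R :> R.
  by rewrite ler_nat card_M; have := cardsC H; rewrite card_ord; lia.
have hs : \sum_(j in M) sqnorm (msg j - xs i) <= #|M|%:R * (2 * V).
  by rewrite mulr_natl -sumr_const; apply: ler_sum => j; apply: sqnorm_msg_le.
have := ler_wpM2l (ler0n R #|M|) hs.
have : #|M|%:R ^+ 2 <= #|H|%:R ^+ 2 :> R by rewrite lerXn2r ?nnegrE.
nra.
Qed.

Lemma dot_keptH :
  \sum_(j in keptH) 2 * dotv (xs i - xstar) (msg j - xs i)
  = \sum_(j in keptH) d2 j - #|keptH|%:R * d2 i - \sum_(j in keptH) sqnorm (xs i - xs j).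
Proof.
rewrite mulr_natl -sumr_const -!sumrB; apply: eq_bigr => j jK.
rewrite msg_keptH // /d2.
have -> : xs j - xstar = (xs i - xstar) + (xs j - xs i) by rewrite [RHS]addrC addrA subrK.
by rewrite sqnormD [sqnorm (xs j - xs i)]sqnorm_subC; lra.
Qed.

Lemma sum_d2_keptH : \sum_(j in keptH) d2 j = V - d2 i - \sum_(j in dropH) d2 j.
Proof.
by rewrite keptH_eq /V (big_setD1 i iH) /= [in RHS](big_setID M) /=; lra.
Qed.

Lemma dot_keptB_le :
  \sum_(j in keptB) 2 * dotv (xs i - xstar) (msg j - xs i)
  <= 3 * #|keptB|%:R * d2 i + \sum_(j in dropH) d2 j.
Proof.
have [->|[j jB]] := set_0Vmem keptB.
  by rewrite big_set0 cards0 mulr0 mul0r add0r sumr_ge0 // => j _; apply: sqnorm_ge0.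
have [j1 j1D] := exists_dropH jB.
case: (arg_minP d2 j1D) => j0 j0D j0min.
apply: (@le_trans _ _ (#|keptB|%:R * (3 * d2 i + d2 j0))).
  rewrite mulr_natl -sumr_const; apply: ler_sum => l; rewrite inE => /andP[_ lM].
  apply: le_trans (dotv_le_amgm _ _ (ltr0Sn R 1)) _.
  have := sqnorm_msg_le_dropH lM j0D.
  have -> : xs i - xs j0 = (xs i - xstar) - (xs j0 - xstar) by rewrite opprB addrA subrK.
  by have := sqnormB_le (xs i - xstar) (xs j0 - xstar); rewrite /d2; lra.
have BD : #|keptB|%:R * d2 j0 <= \sum_(l in dropH) d2 l.
  apply: le_trans (_ : #|dropH|%:R * d2 j0 <= _).
    by rewrite ler_wpM2r ?sqnorm_ge0 // ler_nat card_keptB_le_dropH.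
  by rewrite mulr_natl -sumr_const; apply: ler_sum => l; apply: j0min.
lra.
Qed.

Hypothesis near_small :
  (#|[set j in H | (sqnorm (xs i - xs j) < mu ^+ 2 * d2 i)%R]| < n - k)%N.

Lemma far_keptH_ge :
  mu ^+ 2 * (k%:R + 1 - 2 * f%:R) * d2 i <= \sum_(j in keptH) sqnorm (xs i - xs j).
Proof.
rewrite mulrAC; have := near_small; set r := mu ^+ 2 * d2 i => near_r.
have r0 : 0 <= r by rewrite mulr_ge0 ?sqr_ge0 ?sqnorm_ge0.
have [r_eq0|r_neq0] := eqVneq r 0.
  by rewrite r_eq0 mul0r sumr_ge0 // => j _; apply: sqnorm_ge0.
have {r_neq0 r0} r_gt0 : 0 < r by rewrite lt_def r_neq0 r0.
pose far : {set 'I_n} := [set j | (r <= sqnorm (xs i - xs j))%R]%SET.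
have i_far : i \notin far by rewrite inE subrr sqnorm0 -ltNge.
have card_far : (k + 1 <= #|keptH :&: far| + 2 * f)%N.
  have near_eq : [set j in H | (sqnorm (xs i - xs j) < r)%R]%SET = H :\: far.
    by apply/finset.setP => j; rewrite !inE ltNge andbC.
  have HF : (H :&: far \subset (keptH :&: far) :|: dropH).
    apply/fintype.subsetP => j; rewrite !inE => /andP[jH jF].
    case jM : (j \in M); rewrite ?jH ?jF //= andbT; apply: contraNneq i_far => <-.
    by rewrite inE.
  have := subset_leq_card HF; rewrite cardsU.
  rewrite near_eq in near_r; have := cardsID far H.
  have := card_H_split; have := card_kept; have := card_keptB; have := cardsC H.
  rewrite card_ord; lia.
apply: (@le_trans _ _ (#|keptH :&: far|%:R * r)).
  rewrite [leLHS]mulrC ler_pM2r //.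
  have : ((k + 1)%:R <= (#|keptH :&: far| + 2 * f)%:R :> R) by rewrite ler_nat.
  by rewrite !natrD; lra.
rewrite (big_setID far) /= -[X in X <= _]addr0 lerD ?sumr_ge0 // => [|j _]; last exact: sqnorm_ge0.
rewrite mulr_natl -sumr_const; apply: ler_sum => j.
by rewrite !inE => /andP[_].
Qed.

Lemma dot_update_le :
  2 * dotv (xs i - xstar) (\sum_(j in M) (msg j - xs i))
  <= V - (n%:R - f%:R - 4 * #|~: H|%:R + mu ^+ 2 * (k%:R + 1 - 2 * f%:R)) * d2 i.
Proof.
rewrite dotv_sumr mulr_sumr (big_setID H) /= -/keptB dot_keptH sum_d2_keptH.
have := dot_keptB_le; have := far_keptH_ge.
have : (#|keptH| + #|keptB| + f + 1)%:R = n%:R :> R by rewrite card_kept.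
have : #|keptB|%:R <= #|~: H|%:R :> R by rewrite ler_nat card_keptB.
rewrite -subr_ge0 !natrD => BH KBn; have := mulr_ge0 BH (sqnorm_ge0 _ : 0 <= d2 i).
have KR : #|keptH|%:R = n%:R - f%:R - 1 - #|keptB|%:R :> R by lra.
rewrite KR; nra.
Qed.

Lemma agent_step_le (alpha : R) : 0 <= alpha ->
  sqnorm (xs i + alpha *: \sum_(j in M) (msg j - xs i) - xstar)
  <= d2 i + alpha * (V - (n%:R - f%:R - 4 * #|~: H|%:R + mu ^+ 2 * (k%:R + 1 - 2 * f%:R)) * d2 i)
     + alpha ^+ 2 * (2 * #|H|%:R ^+ 2 * V).
Proof.
move=> alpha0; rewrite addrAC sqnormD dotvZr sqnormZ.
have := ler_wpM2l alpha0 dot_update_le; have := ler_wpM2l (sqr_ge0 alpha) sqnorm_update_le.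
rewrite /d2; lra.
Qed.

End AgentStep.

Lemma geometric_decay (R : realFieldType) (V : nat -> R) (r : R) :
  r < 1 -> (forall t, 0 <= V t) -> (forall t, V t.+1 <= r * V t) ->
  exists rho, 0 < rho < 1 /\ forall t, V t <= rho ^+ t * V 0%N.
Proof.
move=> r1 V0 hV; pose rho := Num.max r (1/2).
have r_rho : r <= rho by rewrite le_max lexx.
have rho0 : 0 <= rho by rewrite le_max; apply/orP; right; lra.
exists rho; split; first by rewrite lt_max gt_max r1 /=; apply/andP; split; lra.
elim=> [|t IH]; first by rewrite expr0 mul1r.
apply: le_trans (hV t) _; apply: le_trans (ler_wpM2r (V0 t) r_rho) _.
by rewrite exprS -mulrA; apply: ler_wpM2l.
Qed.

Lemma k_redundant_trivial (R : realType) m n k (X : 'I_n -> set 'rV[R]_m) H a :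
  k_redundant X H k -> capX X H = [set a] -> (n <= k)%N -> forall v, v = a.
Proof.
move=> hred hcap nk v.
have : capX X finset.set0 v by move=> i; rewrite finset.in_set0.
rewrite hred; [by rewrite hcap | exact: finset.sub0set | by rewrite cards0 leqn0 subn_eq0].
Qed.

Lemma contraction_rate_lt1 (R : realFieldType) (alpha c N : R) :
  0 < alpha -> 0 <= N -> alpha < c / (4 * N ^+ 3) ->
  1 - alpha * c + 2 * alpha ^+ 2 * N ^+ 3 < 1.
Proof.
move=> alpha_gt0 N_ge0 alpha_small.
have N_gt0 : 0 < N.
  rewrite lt_def N_ge0 andbT; apply: contraTneq alpha_small => ->.
  by rewrite expr0n mulr0 invr0 mulr0 -leNgt ltW.
move: alpha_small; rewrite ltr_pdivlMr ?mulr_gt0 ?exprn_gt0 // -(ltr_pM2l alpha_gt0).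
have : 0 < alpha ^+ 2 * N ^+ 3 by rewrite mulr_gt0 ?exprn_gt0.
nra.
Qed.

Section Consensus.
Variables (R : realType) (m n f k : nat) (H : {set 'I_n}) (X : 'I_n -> set 'rV[R]_m)
  (xstar : 'rV[R]_m) (mu alpha : R) (x : nat -> 'I_n -> 'rV[R]_m)
  (msg : nat -> 'I_n -> 'I_n -> 'rV[R]_m) (M : nat -> 'I_n -> {set 'I_n}).
Hypotheses (card_byz : (#|~: H| <= f)%N)
  (X_cvx : forall i, i \in H -> [/\ X i !=set0, eclosed (X i) & convex_set (X i)])
  (capXH : capX X H = [set xstar]) (redundant : k_redundant X H k) (mu_gt0 : 0 < mu)
  (regular : forall (y : 'rV[R]_m) (S : {set 'I_n}), S \subset H -> (n - k <= #|S|)%N ->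
     \big[Num.max/0]_(i in S) dist y (X i) >= mu * dist y (capX X S))
  (k_lt_n : (k < n)%N) (f_lt_n : (f < n)%N) (alpha_ge0 : 0 <= alpha)
  (run : algorithm_run f X H alpha x msg M).

Let V t := \sum_(i in H) sqnorm (x t i - xstar).

Lemma state_in_X t i : i \in H -> X i (x t i).
Proof.
have [x0X [_ step]] := run; elim: t i => [|t IH] i iH; first exact: x0X.
have [_ _ _ ->] := step t i iH; have [X0 Xcl Xcv] := X_cvx iH.
exact: (proj_spec Xcv Xcl X0 _).1.
Qed.

Lemma sqnorm_next_le t i : i \in H ->
  sqnorm (x t.+1 i - xstar)
  <= sqnorm (x t i - xstar)
     + alpha * (V t - (n%:R - f%:R - 4 * #|~: H|%:R + mu ^+ 2 * (k%:R + 1 - 2 * f%:R))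
                      * sqnorm (x t i - xstar))
     + alpha ^+ 2 * (2 * #|H|%:R ^+ 2 * V t).
Proof.
move=> iH; have [_ [msg_normal step]] := run; have [M_sub card_M M_nearest ->] := step t i iH.
have [X0 Xcl Xcv] := X_cvx iH.
have xstarH : capX X H xstar by rewrite capXH.
apply: le_trans (sqnorm_proj_sub_le Xcv (proj_spec Xcv Xcl X0 _) (xstarH i iH)) _.
apply: (@agent_step_le _ _ _ _ _ _ (x t) (fun j => msg t j i)) => //.
  by move=> j jH ji; apply: msg_normal.
apply: (card_near_lt (X := X)) => // [S SH Sbig|j jH]; first by rewrite -capXH; apply: redundant.
exact: state_in_X.
Qed.

Lemma lyapunov_step t :
  V t.+1 <= (1 - alpha * (mu ^+ 2 * k%:R - 2 * f%:R * mu ^+ 2 - 4 * f%:R + mu ^+ 2)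
             + 2 * alpha ^+ 2 * #|H|%:R ^+ 3) * V t.
Proof.
apply: le_trans (ler_sum _ (fun i iH => sqnorm_next_le t iH)) _.
rewrite !big_split /= -!mulr_sumr sumrB sumr_const -mulr_sumr -/(V t) -(mulr_natr (V t)).
have V0 : 0 <= V t by apply: sumr_ge0 => i _; apply: sqnorm_ge0.
have : (#|H| + #|~: H|)%:R = n%:R :> R by rewrite cardsC card_ord.
have : #|~: H|%:R <= f%:R :> R by rewrite ler_nat.
rewrite -subr_ge0 natrD => byzR nR.
have := mulr_ge0 alpha_ge0 (mulr_ge0 byzR V0).
nra.
Qed.

End Consensus.

Unset Implicit Arguments.

Theorem theorem2 (R : realType) (m n f k : nat)
    (H : {set 'I_n}) (X : 'I_n -> set 'rV[R]_m) (xstar : 'rV[R]_m)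
    (mu alpha : R)
    (x : nat -> 'I_n -> 'rV[R]_m) (msg : nat -> 'I_n -> 'I_n -> 'rV[R]_m)
    (M : nat -> 'I_n -> {set 'I_n}) :
  (#|~: H| <= f)%N ->
  (forall i, i \in H -> [/\ X i !=set0, eclosed (X i) & convex_set (X i)]) ->
  capX X H = [set xstar] ->
  k_redundant X H k ->
  0 < mu ->
  (forall (y : 'rV[R]_m) (S : {set 'I_n}), S \subset H -> (n - k <= #|S|)%N ->
     \big[Num.max/0]_(i in S) dist y (X i) >= mu * dist y (capX X S)) ->
  k%:R > 4 * f%:R / mu ^+ 2 + 2 * f%:R - 1 ->
  0 < alpha ->
  alpha < (mu ^+ 2 * k%:R - 2 * f%:R * mu ^+ 2 - 4 * f%:R + mu ^+ 2) / (4 * #|H|%:R ^+ 3) ->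
  algorithm_run f X H alpha x msg M ->
  exists rho : R, 0 < rho < 1 /\
    forall t : nat,
      \sum_(i in H) enorm (x t i - xstar) ^+ 2
        <= rho ^+ t * \sum_(i in H) enorm (x 0%N i - xstar) ^+ 2.
Proof.
move=> card_byz X_cvx capXH redundant mu_gt0 regular k_big alpha_gt0 alpha_small run.
suff [rho [rho01 decay]] : exists rho : R, 0 < rho < 1 /\ forall t : nat,
    \sum_(i in H) sqnorm (x t i - xstar) <= rho ^+ t * \sum_(i in H) sqnorm (x 0%N i - xstar).
  exists rho; split => // t; under eq_bigr do rewrite enorm_sqr.
  by under [X in _ * X]eq_bigr do rewrite enorm_sqr.
have [n_le_k|k_lt_n] := leqP n k.
  have all_xstar := k_redundant_trivial redundant capXH n_le_k.
  exists (1/2); split => [|t]; first lra.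
  by rewrite !big1 ?mulr0 // => i _; rewrite (all_xstar (x _ i)) subrr sqnorm0.
have f_lt_n : (f < n)%N.
  suff : (2 * f < k + 1)%N by lia.
  have : 0 <= 4 * f%:R / mu ^+ 2 :> R by rewrite divr_ge0 ?sqr_ge0 // mulr_ge0.
  by rewrite -(@ltr_nat R) natrD natrM; lra.
have rate_lt1 := contraction_rate_lt1 alpha_gt0 (ler0n R #|H|) alpha_small.
apply: geometric_decay rate_lt1 (fun t => sumr_ge0 _ (fun i _ => sqnorm_ge0 _)) _.
exact: lyapunov_step card_byz X_cvx capXH redundant mu_gt0 regular k_lt_n f_lt_n (ltW alpha_gt0) run.
Qed.
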